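(* Let $F_0,F_1$ be pure contexts, $t$ a term, and $k,x,y$ variables with $x\notin\mathrm{fv}(F_0)\cup\mathrm{fv}(F_1)$ and $y\notin\mathrm{fv}(F_1)$. Then $\langle t\{\lambda x.\langle F_1[F_0[x]]\rangle/k\}\rangle \approx \langle t\{\lambda x.\langle (\lambda y.F_1[y])\,F_0[x]\rangle/k\}\rangle$.
   Context: The calculus $\lambda_{\mathcal S}$. Terms: $t ::= x \mid \lambda x.t \mid t\,t \mid \mathcal{S}k.t \mid \langle t\rangle$ (shift and reset); values: $v ::= \lambda x.t \mid x$. $\lambda x.t$ binds $x$, $\mathcal{S}k.t$ binds $k$; terms up to $\alpha$-conversion; $\mathrm{fv}$ free variables; capture-avoiding substitution $t\{v/x\}$. Pure contexts $F ::= [\,] \mid v\,F \mid F\,t$; evaluation contexts $E ::= [\,] \mid v\,E \mid E\,t \mid \langle E\rangle$. Reduction: $E[(\lambda x.t)\,v] \to E[t\{v/x\}]$; $E[\langle F[\mathcal{S}k.t]\rangle] \to E[\langle t\{\lambda x.\langle F[x]\rangle/k\}\rangle]$ ($x\notin\mathrm{fv}(F)$); $E[\langle v\rangle]\to E[v]$. $t\Downarrow t'$ iff $t\to^*t'$ and $t'$ irreducible. Normal forms: values, control stuck terms $F[\mathcal{S}k.t]$, open stuck terms $E[x\,v]$. Fresh: not free in the terms/contexts considered. Refined normal form bisimilarity $\approx$: for a relation $\mathcal R$ on terms, $E_0\mathrel{\mathcal R}E_1$ iff either $E_0=E_0'[\langle F_0\rangle]$, $E_1=E_1'[\langle F_1\rangle]$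 ($F_i$ pure) with $E_0'[x]\mathrel{\mathcal R}E_1'[x]$ and $\langle F_0[x]\rangle\mathrel{\mathcal R}\langle F_1[x]\rangle$ ($x$ fresh), or $E_0=F_0$, $E_1=F_1$ pure with $F_0[x]\mathrel{\mathcal R}F_1[x]$ ($x$ fresh). $v\mathbin{@}y$ is $x\,y$ if $v=x$, $t\{y/x\}$ if $v=\lambda x.t$. $\mathcal R^{\mathrm{rnf}}$ on normal forms: $v_0\mathrel{\mathcal R^{\mathrm{rnf}}}v_1$ if $v_0\mathbin{@}x\mathrel{\mathcal R}v_1\mathbin{@}x$ ($x$ fresh); $E_0[x\,v_0]\mathrel{\mathcal R^{\mathrm{rnf}}}E_1[x\,v_1]$ if $E_0\mathrel{\mathcal R}E_1$ and $v_0\mathrel{\mathcal R^{\mathrm{rnf}}}v_1$; $F_0[\mathcal{S}k.t_0]\mathrel{\mathcal R^{\mathrm{rnf}}}F_1[\mathcal{S}k.t_1]$ if $\langle t_0\{\lambda x.\langle k'\,F_0[x]\rangle/k\}\rangle\mathrel{\mathcal R}\langle t_1\{\lambda x.\langle k'\,F_1[x]\rangle/k\}\rangle$ for fresh $k',x$. $\mathcal R$ is a refined simulation if $t_0\mathrel{\mathcal R}t_1$ and $t_0\Downarrow t_0'$ imply $t_1\Downarrow t_1'$ with $t_0'\mathrel{\mathcal R^{\mathrm{rnf}}}t_1'$; a refined bisimulation if $\mathcal R$ and $\mathcal R^{-1}$ are refined simulations; $\approx$ is the largest refined normal form bisimulation. *)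

(* The calculus lambda_S (shift/reset) with terms up to
   alpha-conversion, represented by de Bruijn indices. *)
From Stdlib Require Import Arith Relations.

Inductive term : Type :=
| Var   : nat -> term
| Lam   : term -> term            (* \x.t ; x is index 0 in t *)
| App   : term -> term -> term
| Shift : term -> term            (* S k.t ; k is index 0 in t *)
| Reset : term -> term.

Definition is_val (t : term) : Prop :=
  match t with Var _ | Lam _ => True | _ => False end.

Fixpoint lift (c : nat) (t : term) : term :=
  match t with
  | Var n => if n <? c then Var n else Var (S n)
  | Lam t => Lam (lift (S c) t)
  | App t1 t2 => App (lift c t1) (lift c t2)
  | Shift t => Shift (lift (S c) t)
  | Reset t => Reset (lift c t)
  end.

(* subst c v t : t{v/c}, replacing index c by v (v lives in the scope
   outside the c binders) and decrementing indices above c *)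
Fixpoint subst (c : nat) (v : term) (t : term) : term :=
  match t with
  | Var n => if n <? c then Var n
             else if n =? c then Nat.iter c (lift 0) v
             else Var (pred n)
  | Lam t => Lam (subst (S c) v t)
  | App t1 t2 => App (subst c v t1) (subst c v t2)
  | Shift t => Shift (subst (S c) v t)
  | Reset t => Reset (subst c v t)
  end.

(* t{v/x} where x is the variable bound by the enclosing binder of t *)
Definition subst0 (v t : term) : term := subst 0 v t.

Inductive ctx : Type :=
| CHole  : ctx
| CAppR  : term -> ctx -> ctx
| CAppL  : ctx -> term -> ctx
| CReset : ctx -> ctx.

Fixpoint plug (E : ctx) (t : term) : term :=
  match E with
  | CHole => t
  | CAppR v E => App v (plug E t)
  | CAppL E u => App (plug E t) u
  | CReset E => Reset (plug E t)
  end.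

Fixpoint ccomp (E E' : ctx) : ctx :=
  match E with
  | CHole => E'
  | CAppR v E => CAppR v (ccomp E E')
  | CAppL E u => CAppL (ccomp E E') u
  | CReset E => CReset (ccomp E E')
  end.

Fixpoint liftc (c : nat) (E : ctx) : ctx :=
  match E with
  | CHole => CHole
  | CAppR v E => CAppR (lift c v) (liftc c E)
  | CAppL E u => CAppL (liftc c E) (lift c u)
  | CReset E => CReset (liftc c E)
  end.

Fixpoint is_ectx (E : ctx) : Prop :=
  match E with
  | CHole => True
  | CAppR v E => is_val v /\ is_ectx E
  | CAppL E _ => is_ectx E
  | CReset E => is_ectx E
  end.

Fixpoint is_pure (E : ctx) : Prop :=
  match E with
  | CHole => True
  | CAppR v E => is_val v /\ is_pure E
  | CAppL E _ => is_pure E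
  | CReset _ => False
  end.

(* "x fresh": we extend the scope by one fresh variable, which is index 0
   after lifting everything else. *)
Definition plug_fresh (E : ctx) : term := plug (liftc 0 E) (Var 0).

(* The captured continuation \x.<F[x]>, x not in fv(F). *)
Definition cont_of (F : ctx) : term := Lam (Reset (plug_fresh F)).

Inductive step : term -> term -> Prop :=
| step_beta : forall E t v, is_ectx E -> is_val v ->
    step (plug E (App (Lam t) v)) (plug E (subst0 v t))
| step_shift : forall E F t, is_ectx E -> is_pure F ->
    step (plug E (Reset (plug F (Shift t))))
         (plug E (Reset (subst0 (cont_of F) t)))
| step_reset : forall E v, is_ectx E -> is_val v ->
    step (plug E (Reset v)) (plug E v).

Definition irreducible (t : term) : Prop := forall u, ~ step t u.

Definition eval (t t' : term) : Prop :=
  clos_refl_trans term step t t' /\ irreducible t'.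

Definition ctx_rel (R : term -> term -> Prop) (E0 E1 : ctx) : Prop :=
  (exists E0' F0 E1' F1,
      is_ectx E0' /\ is_pure F0 /\ is_ectx E1' /\ is_pure F1 /\
      E0 = ccomp E0' (CReset F0) /\ E1 = ccomp E1' (CReset F1) /\
      R (plug_fresh E0') (plug_fresh E1') /\
      R (Reset (plug_fresh F0)) (Reset (plug_fresh F1)))
  \/
  (is_pure E0 /\ is_pure E1 /\ R (plug_fresh E0) (plug_fresh E1)).

(* v @ x for a fresh x (result lives in the scope extended by x = index 0):
   x' @ x = x' x,  (\z.t) @ x = t{x/z}. *)
Definition vapp_fresh (v : term) : term :=
  match v with
  | Var n => App (Var (S n)) (Var 0)
  | Lam t => t
  | _ => v
  end.

Definition rnf_val (R : term -> term -> Prop) (v0 v1 : term) : Prop :=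
  is_val v0 /\ is_val v1 /\ R (vapp_fresh v0) (vapp_fresh v1).

(* <t{\x.<k' F[x]>/k}> for fresh k', x, where S k.t is the stuck shift;
   the result lives in the scope extended by k' (= index 0). *)
Definition stuck_cont (F : ctx) (t : term) : term :=
  Reset (subst0
           (Lam (Reset (App (Var 1) (plug (liftc 0 (liftc 0 F)) (Var 0)))))
           (lift 1 t)).

Definition rnf (R : term -> term -> Prop) (t0 t1 : term) : Prop :=
  rnf_val R t0 t1
  \/
  (exists E0 E1 x v0 v1,
      is_ectx E0 /\ is_ectx E1 /\
      t0 = plug E0 (App (Var x) v0) /\ t1 = plug E1 (App (Var x) v1) /\
      ctx_rel R E0 E1 /\ rnf_val R v0 v1)
  \/
  (exists F0 F1 s0 s1,
      is_pure F0 /\ is_pure F1 /\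
      t0 = plug F0 (Shift s0) /\ t1 = plug F1 (Shift s1) /\
      R (stuck_cont F0 s0) (stuck_cont F1 s1)).

Definition refined_sim (R : term -> term -> Prop) : Prop :=
  forall t0 t1 t0', R t0 t1 -> eval t0 t0' ->
    exists t1', eval t1 t1' /\ rnf R t0' t1'.

Definition refined_bisim (R : term -> term -> Prop) : Prop :=
  refined_sim R /\ refined_sim (fun a b => R b a).

Definition rnf_bisimilar (t0 t1 : term) : Prop :=
  exists R, refined_bisim R /\ R t0 t1.

(* The two terms differ only in that [F1[u]] is written as the administrative
   redex [(\y.F1[y]) u].  Let [adm] relate [t] to every [t'] obtained by such
   replacements [G[u] ~> (\y.G'[y]) u'] (with [G] pure), closed under
   congruence.  A head step of [t'] either contracts an administrative redex,
   which makes [t'] smaller and is matched by no step of [t], or is mirrored by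
   the same kind of step of [t]; since reduction is deterministic, [t] and [t']
   therefore reach normal forms together, and [adm]-related normal forms match
   clause by clause as [rnf] requires.  So [adm] is a refined bisimulation. *)

From Stdlib Require Import Arith Lia Relations.

#[local] Arguments Nat.ltb : simpl never.
#[local] Arguments Nat.eqb : simpl never.

Ltac compare_indices :=
  repeat (match goal with
          | |- context [?a <? ?b] => destruct (Nat.ltb_spec a b)
          | |- context [?a =? ?b] => destruct (Nat.eqb_spec a b)
          end; cbn);
  try (exfalso; lia).

Lemma lift_lift_comm t k c : k <= c -> lift (S c) (lift k t) = lift k (lift c t).
Proof.
  revert k c; induction t; intros k c Hkc; cbn.
  1: compare_indices; reflexivity.
  all: f_equal; auto with arith.
Qed.

Lemma lift_iter_lift c k v : k <= c ->
  lift k (Nat.iter c (lift 0) v) = Nat.iter (S c) (lift 0) v.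
Proof.
  revert k; induction c as [|c IH]; intros [|k] Hkc; try lia; try reflexivity.
  change (Nat.iter (S c) (lift 0) v) with (lift 0 (Nat.iter c (lift 0) v)).
  rewrite lift_lift_comm, IH by lia; reflexivity.
Qed.

Lemma subst_lift_comm t v k c : k <= c ->
  subst (S c) v (lift k t) = lift k (subst c v t).
Proof.
  revert k c; induction t; intros k c Hkc; cbn.
  2-5: f_equal; auto with arith.
  destruct (Nat.ltb_spec n k); cbn; compare_indices; try reflexivity.
  - subst; rewrite lift_iter_lift by lia; reflexivity.
  - f_equal; lia.
Qed.

Lemma subst_lift_cancel t c w : subst c w (lift c t) = t.
Proof.
  revert c; induction t; intros c; cbn.
  1: destruct (Nat.ltb_spec n c); cbn; compare_indices; reflexivity.
  all: f_equal; auto.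
Qed.

Fixpoint substc (c : nat) (v : term) (E : ctx) : ctx :=
  match E with
  | CHole => CHole
  | CAppR a E => CAppR (subst c v a) (substc c v E)
  | CAppL E u => CAppL (substc c v E) (subst c v u)
  | CReset E => CReset (substc c v E)
  end.

Lemma lift_plug E c t : lift c (plug E t) = plug (liftc c E) (lift c t).
Proof. induction E; cbn; f_equal; auto. Qed.

Lemma subst_plug E c v t : subst c v (plug E t) = plug (substc c v E) (subst c v t).
Proof. induction E; cbn; f_equal; auto. Qed.

Lemma liftc_liftc_comm E c : liftc (S c) (liftc 0 E) = liftc 0 (liftc c E).
Proof. induction E; cbn; f_equal; auto using lift_lift_comm with arith. Qed.

Lemma substc_liftc_comm E c v : substc (S c) v (liftc 0 E) = liftc 0 (substc c v E).
Proof. induction E; cbn; f_equal; auto using subst_lift_comm with arith. Qed.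

Lemma substc_liftc_cancel E c w : substc c w (liftc c E) = E.
Proof. induction E; cbn; f_equal; auto using subst_lift_cancel. Qed.

Lemma liftc_ccomp E E' c : liftc c (ccomp E E') = ccomp (liftc c E) (liftc c E').
Proof. induction E; cbn; f_equal; auto. Qed.

Lemma plug_ccomp E E' t : plug (ccomp E E') t = plug E (plug E' t).
Proof. induction E; cbn; f_equal; auto. Qed.

Lemma ccompA E1 E2 E3 : ccomp (ccomp E1 E2) E3 = ccomp E1 (ccomp E2 E3).
Proof. induction E1; cbn; f_equal; auto. Qed.

Lemma subst0_plug_fresh E w : subst0 w (plug_fresh E) = plug E w.
Proof.
  unfold subst0, plug_fresh; rewrite subst_plug, substc_liftc_cancel; reflexivity.
Qed.

Lemma is_val_lift v c : is_val v -> is_val (lift c v).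
Proof. destruct v; cbn; try contradiction; auto. destruct (n <? c); cbn; auto. Qed.

Lemma is_val_iter_lift c v : is_val v -> is_val (Nat.iter c (lift 0) v).
Proof. induction c; cbn; auto using is_val_lift. Qed.

Lemma is_val_subst t c v : is_val v -> is_val t -> is_val (subst c v t).
Proof.
  destruct t; cbn; try contradiction; auto; intros Hv _.
  destruct (n <? c); [exact I|]. destruct (n =? c); auto using is_val_iter_lift; exact I.
Qed.

Lemma is_pure_liftc E c : is_pure E -> is_pure (liftc c E).
Proof. induction E; cbn; intuition auto using is_val_lift. Qed.

Lemma is_pure_ectx E : is_pure E -> is_ectx E.
Proof. induction E; cbn; intuition. Qed.

Lemma is_ectx_ccomp E E' : is_ectx E -> is_ectx E' -> is_ectx (ccomp E E').
Proof. induction E; cbn; intuition. Qed.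

Lemma is_pure_ccomp E E' : is_pure E -> is_pure E' -> is_pure (ccomp E E').
Proof. induction E; cbn; intuition. Qed.

Lemma plug_is_val E t : is_val (plug E t) -> E = CHole /\ is_val t.
Proof. destruct E; cbn; tauto. Qed.

Lemma plug_shift_not_val E s : ~ is_val (plug E (Shift s)).
Proof. intros H; apply plug_is_val in H as [_ []]. Qed.

Inductive hstep : term -> term -> Prop :=
| hstep_beta b v : is_val v -> hstep (App (Lam b) v) (subst0 v b)
| hstep_shift F s : is_pure F ->
    hstep (Reset (plug F (Shift s))) (Reset (subst0 (cont_of F) s))
| hstep_reset v : is_val v -> hstep (Reset v) v.

Lemma stepE t u : step t u ->
  exists E r c, is_ectx E /\ hstep r c /\ t = plug E r /\ u = plug E c.
Proof. destruct 1; do 3 eexists; repeat split; eauto; constructor; auto. Qed.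

Lemma hstep_step E r c : is_ectx E -> hstep r c -> step (plug E r) (plug E c).
Proof. intros HE []; constructor; auto. Qed.

Lemma step_plug E t u : is_ectx E -> step t u -> step (plug E t) (plug E u).
Proof.
  intros HE (E' & r & c & HE' & Hrc & -> & ->)%stepE.
  rewrite <- !plug_ccomp; auto using hstep_step, is_ectx_ccomp.
Qed.

(* Head redexes and open stuck applications [x v]: the subterms at which a
   term splits uniquely into an evaluation context and its focus. *)
Inductive focus : term -> Prop :=
| focus_beta b v : is_val v -> focus (App (Lam b) v)
| focus_reset v : is_val v -> focus (Reset v)
| focus_shift F s : is_pure F -> focus (Reset (plug F (Shift s)))
| focus_open x v : is_val v -> focus (App (Var x) v).

Lemma hstep_focus r c : hstep r c -> focus r.
Proof. destruct 1; [apply focus_beta | apply focus_shift | apply focus_reset]; auto. Qed.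

Lemma plug_focus_not_val E r : focus r -> ~ is_val (plug E r).
Proof. intros Hr (-> & Hv)%plug_is_val; destruct Hr; exact Hv. Qed.

Ltac absurd_plug_val :=
  exfalso;
  match goal with
  | H : is_val (plug ?E (Shift ?s)) |- _ => exact (plug_shift_not_val E s H)
  | H : is_val (plug ?E ?r), Hr : focus ?r |- _ => exact (plug_focus_not_val E r Hr H)
  | H : ?t = plug ?E (Shift ?s) |- _ =>
      apply (plug_shift_not_val E s); rewrite <- H; exact I
  | H : ?t = plug ?E ?r, Hr : focus ?r |- _ =>
      apply (plug_focus_not_val E r Hr); rewrite <- H; exact I
  end.

Lemma plug_shift_neq_plug_focus F s E r : is_pure F -> is_ectx E -> focus r ->
  plug F (Shift s) <> plug E r.
Proof.
  revert E; induction F as [|v F IH|F IH u|F]; intros E HF HE Hr Heq; cbn in HF;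
    try contradiction.
  - destruct E; cbn in Heq; try discriminate; subst; inversion Hr.
  - destruct HF as [Hv HF]; destruct E as [|v' E|E u|E]; cbn in Heq, HE;
      try discriminate.
    + subst; inversion Hr; subst; absurd_plug_val.
    + injection Heq; intros; eapply IH; intuition eauto.
    + injection Heq; intros; subst; absurd_plug_val.
  - destruct E as [|v' E|E u'|E]; cbn in Heq, HE; try discriminate.
    + subst; inversion Hr; subst; absurd_plug_val.
    + injection Heq; intros; subst; destruct HE; absurd_plug_val.
    + injection Heq; intros; eapply IH; eauto.
Qed.

Lemma focus_plug E r : is_ectx E -> focus r -> focus (plug E r) -> E = CHole.
Proof.
  intros HE Hr HEr; destruct E as [|v E|E u|E]; cbn in HE, HEr; auto; exfalso.
  all: inversion HEr; subst; try absurd_plug_val.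
  eapply (plug_shift_neq_plug_focus _ _ E r); eauto.
Qed.

Lemma plug_focus_hole E r r' : is_ectx E -> focus r -> focus r' -> r' = plug E r ->
  E = CHole /\ r' = r.
Proof. intros HE Hr Hr' ->; pose proof (focus_plug E r HE Hr Hr') as ->; auto. Qed.

Lemma plug_focus_inj E1 E2 r1 r2 : is_ectx E1 -> is_ectx E2 -> focus r1 -> focus r2 ->
  plug E1 r1 = plug E2 r2 -> E1 = E2 /\ r1 = r2.
Proof.
  revert E2; induction E1 as [|v E1 IH|E1 IH u|E1 IH]; intros E2 HE1 HE2 Hr1 Hr2 Heq.
  - destruct (plug_focus_hole E2 r2 r1) as [-> ->]; auto.
  - destruct E2 as [|v' E2|E2 u'|E2]; try discriminate.
    + destruct (plug_focus_hole _ r1 r2 HE1 Hr1 Hr2) as [? _]; auto; discriminate.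
    + injection Heq as -> Heq; destruct HE1, HE2.
      destruct (IH E2) as [-> ->]; auto.
    + injection Heq as -> _; destruct HE1; absurd_plug_val.
  - destruct E2 as [|v' E2|E2 u'|E2]; try discriminate.
    + destruct (plug_focus_hole _ r1 r2 HE1 Hr1 Hr2) as [? _]; auto; discriminate.
    + injection Heq as <- _; destruct HE2; absurd_plug_val.
    + injection Heq as Heq ->; destruct (IH E2) as [-> ->]; auto.
  - destruct E2 as [|v' E2|E2 u'|E2]; try discriminate.
    + destruct (plug_focus_hole _ r1 r2 HE1 Hr1 Hr2) as [? _]; auto; discriminate.
    + injection Heq as Heq; destruct (IH E2) as [-> ->]; auto.
Qed.

Lemma plug_shift_inj F F' s s' : is_pure F -> is_pure F' ->
  plug F (Shift s) = plug F' (Shift s') -> F = F' /\ s = s'.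
Proof.
  revert F'; induction F as [|v F IH|F IH u|F]; intros [|v' F'|F' u'|F'] HF HF' Heq;
    cbn in *; try discriminate; try contradiction.
  - injection Heq; auto.
  - injection Heq as -> Heq; destruct (IH F') as [-> ->]; intuition.
  - injection Heq as -> _; destruct HF; absurd_plug_val.
  - injection Heq as <- _; destruct HF'; absurd_plug_val.
  - injection Heq as Heq ->; destruct (IH F') as [-> ->]; auto.
Qed.

Lemma hstep_det r c c' : hstep r c -> hstep r c' -> c = c'.
Proof.
  intros [b v Hv | F s HF | v Hv] Hc'; inversion Hc'; subst; auto; try absurd_plug_val.
  destruct (plug_shift_inj F F0 s s0) as [-> ->]; auto.
Qed.

Lemma step_det t u u' : step t u -> step t u' -> u = u'.
Proof.
  intros (E & r & c & HE & Hrc & -> & ->)%stepE (E' & r' & c' & HE' & Hrc' & Heq & ->)%stepE.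
  destruct (plug_focus_inj E E' r r') as [-> ->]; eauto using hstep_focus.
  rewrite (hstep_det r' c c'); auto.
Qed.

Definition is_nf (t : term) : Prop :=
  is_val t \/
  (exists E x v, is_ectx E /\ is_val v /\ t = plug E (App (Var x) v)) \/
  (exists F s, is_pure F /\ t = plug F (Shift s)).

Lemma nf_irreducible t : is_nf t -> irreducible t.
Proof.
  intros Hnf u (E & r & c & HE & Hrc & -> & _)%stepE.
  pose proof (hstep_focus r c Hrc) as Hr.
  destruct Hnf as [Hv | [(E' & x & v & HE' & Hv & Heq) | (F & s & HF & Heq)]].
  - exact (plug_focus_not_val E r Hr Hv).
  - destruct (plug_focus_inj E E' r (App (Var x) v)) as [_ ->]; auto using focus_open.
    inversion Hrc.
  - exact (plug_shift_neq_plug_focus F s E r HF HE Hr (eq_sym Heq)).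
Qed.

Lemma progress t : (exists u, step t u) \/ is_nf t.
Proof.
  induction t as [n | t _ | t1 IH1 t2 IH2 | t _ | t IH].
  - right; left; exact I.
  - right; left; exact I.
  - destruct IH1 as [(u & Hu) | [Hv1 | [(E & x & v & HE & Hv & ->) | (F & s & HF & ->)]]].
    + left; exists (App u t2); apply (step_plug (CAppL CHole t2)); cbn; auto.
    + destruct IH2 as [(u & Hu) | [Hv2 | [(E & x & v & HE & Hv & ->) | (F & s & HF & ->)]]].
      * left; exists (App t1 u); apply (step_plug (CAppR t1 CHole)); cbn; auto.
      * destruct t1 as [x | b | | |]; try contradiction.
        -- right; right; left; exists CHole, x, t2; cbn; auto.
        -- left; exists (subst0 t2 b); apply (hstep_step CHole); cbn; auto using hstep.
      * right; right; left; exists (CAppR t1 E), x, v; cbn; auto.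
      * right; right; right; exists (CAppR t1 F), s; cbn; auto.
    + right; right; left; exists (CAppL E t2), x, v; cbn; auto.
    + right; right; right; exists (CAppL F t2), s; cbn; auto.
  - right; right; right; exists CHole, t; cbn; auto.
  - destruct IH as [(u & Hu) | [Hv | [(E & x & v & HE & Hv & ->) | (F & s & HF & ->)]]].
    + left; exists (Reset u); apply (step_plug (CReset CHole)); cbn; auto.
    + left; exists t; apply (hstep_step CHole); cbn; auto using hstep.
    + right; right; left; exists (CReset E), x, v; cbn; auto.
    + left; eexists; apply (hstep_step CHole); cbn; auto using hstep.
Qed.

Lemma irreducible_nf t : irreducible t -> is_nf t.
Proof. intros Hirr; destruct (progress t) as [(u & Hu) |]; [destruct (Hirr u Hu) | auto]. Qed.

Lemma lift_plug_fresh E c : lift (S c) (plug_fresh E) = plug_fresh (liftc c E).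
Proof. unfold plug_fresh; rewrite lift_plug, liftc_liftc_comm; reflexivity. Qed.

Lemma subst_plug_fresh E c v : subst (S c) v (plug_fresh E) = plug_fresh (substc c v E).
Proof. unfold plug_fresh; rewrite subst_plug, substc_liftc_comm; reflexivity. Qed.

Inductive adm : term -> term -> Prop :=
| adm_var n : adm (Var n) (Var n)
| adm_lam t t' : adm t t' -> adm (Lam t) (Lam t')
| adm_app t1 t2 t1' t2' : adm t1 t1' -> adm t2 t2' -> adm (App t1 t2) (App t1' t2')
| adm_shift t t' : adm t t' -> adm (Shift t) (Shift t')
| adm_reset t t' : adm t t' -> adm (Reset t) (Reset t')
| adm_expand G G' u u' : adm_pure G G' -> adm u u' ->
    adm (plug G u) (App (Lam (plug_fresh G')) u')
with adm_pure : ctx -> ctx -> Prop :=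
| adm_pure_hole : adm_pure CHole CHole
| adm_pure_appR v v' G G' : is_val v -> is_val v' -> adm v v' -> adm_pure G G' ->
    adm_pure (CAppR v G) (CAppR v' G')
| adm_pure_appL G G' t t' : adm_pure G G' -> adm t t' ->
    adm_pure (CAppL G t) (CAppL G' t').

Scheme adm_ind' := Induction for adm Sort Prop
with adm_pure_ind' := Induction for adm_pure Sort Prop.
Combined Scheme adm_mutind from adm_ind', adm_pure_ind'.

Lemma adm_refl t : adm t t.
Proof. induction t; constructor; auto. Qed.

Lemma adm_pure_refl G : is_pure G -> adm_pure G G.
Proof. induction G; cbn; intuition auto using adm, adm_pure, adm_refl. Qed.

Lemma adm_pure_is_pure G G' : adm_pure G G' -> is_pure G /\ is_pure G'.
Proof. induction 1; cbn; intuition. Qed.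

Lemma adm_pure_plug G G' t t' : adm_pure G G' -> adm t t' -> adm (plug G t) (plug G' t').
Proof. intros HG; revert t t'; induction HG; cbn; auto using adm. Qed.

Lemma adm_lift_mut :
  (forall t t', adm t t' -> forall c, adm (lift c t) (lift c t')) /\
  (forall G G', adm_pure G G' -> forall c, adm_pure (liftc c G) (liftc c G')).
Proof.
  apply adm_mutind; intros; cbn; auto using adm, adm_pure, is_val_lift.
  - destruct (n <? c); constructor.
  - rewrite lift_plug, lift_plug_fresh; constructor; auto.
Qed.

Lemma adm_lift t t' c : adm t t' -> adm (lift c t) (lift c t').
Proof. intros; apply adm_lift_mut; auto. Qed.

Lemma adm_pure_liftc G G' c : adm_pure G G' -> adm_pure (liftc c G) (liftc c G').
Proof. intros; apply adm_lift_mut; auto. Qed.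

Lemma adm_iter_lift c v v' : adm v v' -> adm (Nat.iter c (lift 0) v) (Nat.iter c (lift 0) v').
Proof. induction c; cbn; auto using adm_lift. Qed.

Lemma adm_subst_mut :
  (forall t t', adm t t' -> forall c v v', is_val v -> is_val v' -> adm v v' ->
     adm (subst c v t) (subst c v' t')) /\
  (forall G G', adm_pure G G' -> forall c v v', is_val v -> is_val v' -> adm v v' ->
     adm_pure (substc c v G) (substc c v' G')).
Proof.
  apply adm_mutind; intros; cbn; auto using adm, adm_pure, is_val_subst.
  - destruct (n <? c); [constructor |].
    destruct (n =? c); [apply adm_iter_lift; auto | constructor].
  - rewrite subst_plug, subst_plug_fresh; constructor; auto.
Qed.

Lemma adm_subst0 t t' v v' : is_val v -> is_val v' -> adm v v' -> adm t t' ->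
  adm (subst0 v t) (subst0 v' t').
Proof. intros; apply adm_subst_mut; auto. Qed.

Lemma adm_is_val t v : adm t v -> is_val v -> is_val t.
Proof. destruct 1; cbn; tauto. Qed.

Lemma adm_val_inv t v : adm t v -> is_val v ->
  (exists n, t = Var n /\ v = Var n) \/ (exists b b', t = Lam b /\ v = Lam b' /\ adm b b').
Proof. destruct 1; cbn; try contradiction; eauto 6. Qed.

(* In [adm_ectx_expand] the hole of [(\y.G'[y]) E'] lies in the argument of an
   administrative redex, so it corresponds to the context [G[E]]. *)
Inductive adm_ectx : ctx -> ctx -> Prop :=
| adm_ectx_hole : adm_ectx CHole CHole
| adm_ectx_appR v v' E E' : is_val v -> is_val v' -> adm v v' -> adm_ectx E E' ->
    adm_ectx (CAppR v E) (CAppR v' E')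
| adm_ectx_appL E E' t t' : adm_ectx E E' -> adm t t' -> adm_ectx (CAppL E t) (CAppL E' t')
| adm_ectx_reset E E' : adm_ectx E E' -> adm_ectx (CReset E) (CReset E')
| adm_ectx_expand G G' E E' : adm_pure G G' -> adm_ectx E E' ->
    adm_ectx (ccomp G E) (CAppR (Lam (plug_fresh G')) E').

Lemma adm_ectx_plug E E' t t' : adm_ectx E E' -> adm t t' -> adm (plug E t) (plug E' t').
Proof.
  intros HE; revert t t'; induction HE; intros; cbn; auto using adm.
  rewrite plug_ccomp; constructor; auto.
Qed.

Lemma adm_ectx_liftc E E' c : adm_ectx E E' -> adm_ectx (liftc c E) (liftc c E').
Proof.
  induction 1; cbn; auto using adm_ectx, is_val_lift, adm_lift.
  rewrite liftc_ccomp, lift_plug_fresh; constructor; auto using adm_pure_liftc.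
Qed.

Lemma adm_plug_fresh E E' : adm_ectx E E' -> adm (plug_fresh E) (plug_fresh E').
Proof. intros; apply adm_ectx_plug; auto using adm_ectx_liftc, adm. Qed.

Lemma adm_ectx_is_ectx E E' : adm_ectx E E' -> is_ectx E /\ is_ectx E'.
Proof.
  induction 1; cbn; intuition.
  apply is_ectx_ccomp; auto; apply is_pure_ectx, (adm_pure_is_pure G G'); auto.
Qed.

Lemma adm_ectx_pure E E' : adm_ectx E E' -> is_pure E' -> is_pure E.
Proof.
  induction 1; cbn; intuition.
  apply is_pure_ccomp; auto; apply (adm_pure_is_pure G G'); auto.
Qed.

Lemma adm_plug_inv E' t r' : is_ectx E' -> adm t (plug E' r') -> ~ is_val r' ->
  exists E r, t = plug E r /\ adm_ectx E E' /\ adm r r'.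
Proof.
  revert t; induction E' as [|v' E' IH|E' IH u'|E' IH]; intros t HE' Ht Hr'; cbn in *.
  - exists CHole, t; cbn; auto using adm_ectx.
  - destruct HE' as [Hv' HE']; inversion Ht; subst.
    + destruct (IH t2) as (E & r & -> & HE & Hr); auto.
      exists (CAppR t1 E), r; eauto 6 using adm_ectx, adm_is_val.
    + destruct (IH u) as (E & r & -> & HE & Hr); auto.
      exists (ccomp G E), r; rewrite plug_ccomp; auto using adm_ectx.
  - inversion Ht; subst.
    + destruct (IH t1) as (E & r & -> & HE & Hr); auto.
      exists (CAppL E t2), r; auto using adm_ectx.
    + exfalso; apply Hr', (plug_is_val E' r').
      match goal with H : Lam _ = plug E' r' |- _ => rewrite <- H; exact I end.
  - inversion Ht; subst.
    destruct (IH t0) as (E & r & -> & HE & Hr); auto.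
    exists (CReset E), r; auto using adm_ectx.
Qed.

Lemma adm_plug_shift_inv F' t s' : is_pure F' -> adm t (plug F' (Shift s')) ->
  exists F s, is_pure F /\ t = plug F (Shift s) /\ adm_ectx F F' /\ adm s s'.
Proof.
  intros HF' Ht.
  destruct (adm_plug_inv F' t (Shift s')) as (F & r & -> & HF & Hr);
    auto using is_pure_ectx.
  inversion Hr; subst; eauto 7 using adm_ectx_pure.
Qed.

Fixpoint napp (t : term) : nat :=
  match t with
  | Var _ => 0
  | Lam t | Shift t | Reset t => napp t
  | App t1 t2 => S (napp t1 + napp t2)
  end.

Fixpoint napp_ctx (E : ctx) : nat :=
  match E with
  | CHole => 0
  | CAppR t E | CAppL E t => S (napp_ctx E + napp t)
  | CReset E => napp_ctx E
  end.

Lemma napp_lift t c : napp (lift c t) = napp t.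
Proof. revert c; induction t; intros; cbn; auto. destruct (n <? c); auto. Qed.

Lemma napp_ctx_liftc E c : napp_ctx (liftc c E) = napp_ctx E.
Proof. induction E; cbn; rewrite ?napp_lift; auto. Qed.

Lemma napp_plug E t : napp (plug E t) = napp_ctx E + napp t.
Proof. induction E; cbn; rewrite ?IHE; lia. Qed.

Lemma adm_cont_of F F' : adm_ectx F F' -> adm (cont_of F) (cont_of F').
Proof. intros; apply adm_lam, adm_reset, adm_plug_fresh; auto. Qed.

Lemma adm_hstep r r' c' : adm r r' -> hstep r' c' ->
  (adm r c' /\ napp c' < napp r') \/ (exists c, hstep r c /\ adm c c').
Proof.
  intros Hr Hr'; destruct Hr' as [b' v' Hv' | F' s' HF' | v' Hv'].
  - inversion Hr as [| | t1 t2 ? ? Ht1 Ht2 | | | G G' u ? HG Hu]; subst.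
    + destruct (adm_val_inv t1 (Lam b') Ht1 I)
        as [(n & _ & [=]) | (b & ? & -> & [= <-] & Hb)].
      right; exists (subst0 t2 b); split.
      * constructor; eapply adm_is_val; eauto.
      * apply adm_subst0; eauto using adm_is_val.
    + left; unfold subst0; rewrite subst0_plug_fresh; split.
      * apply adm_pure_plug; auto.
      * unfold plug_fresh; cbn; rewrite !napp_plug, napp_ctx_liftc; cbn; lia.
  - inversion Hr as [| | | | t ? Ht |]; subst.
    destruct (adm_plug_shift_inv F' t s') as (F & s & HF & -> & HFF' & Hs); auto.
    right; exists (Reset (subst0 (cont_of F) s)); split.
    + constructor; auto.
    + apply adm_reset, adm_subst0; cbn; auto using adm_cont_of.
  - inversion Hr as [| | | | t ? Ht |]; subst.
    right; exists t; split; auto.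
    constructor; eapply adm_is_val; eauto.
Qed.

Lemma adm_step t t' u' : adm t t' -> step t' u' ->
  (adm t u' /\ napp u' < napp t') \/ (exists u, step t u /\ adm u u').
Proof.
  intros Ht (E' & r' & c' & HE' & Hrc' & -> & ->)%stepE.
  destruct (adm_plug_inv E' t r') as (E & r & -> & HE & Hr); auto.
  { exact (fun Hv => plug_focus_not_val CHole r' (hstep_focus r' c' Hrc') Hv). }
  destruct (adm_hstep r r' c' Hr Hrc') as [[Hrc Hlt] | (c & Hrc & Hc)].
  - left; split; [apply adm_ectx_plug; auto |]; rewrite !napp_plug; lia.
  - right; exists (plug E c); split.
    + apply hstep_step; auto; apply (adm_ectx_is_ectx E E'); auto.
    + apply adm_ectx_plug; auto.
Qed.

Lemma rnf_val_flip (R : term -> term -> Prop) v0 v1 :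
  rnf_val R v0 v1 -> rnf_val (fun a b => R b a) v1 v0.
Proof. unfold rnf_val; tauto. Qed.

Lemma ctx_rel_flip (R : term -> term -> Prop) E0 E1 :
  ctx_rel R E0 E1 -> ctx_rel (fun a b => R b a) E1 E0.
Proof.
  intros [(E0' & F0 & E1' & F1 & ?) | ?]; [left; exists E1', F1, E0', F0 | right]; tauto.
Qed.

Lemma rnf_flip (R : term -> term -> Prop) t0 t1 :
  rnf R t0 t1 -> rnf (fun a b => R b a) t1 t0.
Proof.
  intros [Hv | [(E0 & E1 & x & v0 & v1 & ? & ? & ? & ? & ? & ?) |
               (F0 & F1 & s0 & s1 & ? & ? & ? & ? & ?)]].
  - left; apply rnf_val_flip; auto.
  - right; left; exists E1, E0, x, v1, v0; auto 10 using ctx_rel_flip, rnf_val_flip.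
  - right; right; exists F1, F0, s1, s0; auto.
Qed.

Lemma adm_ectx_split E E' : adm_ectx E E' ->
  (is_pure E /\ is_pure E') \/
  (exists E0 F0 E0' F0', is_pure F0 /\ is_pure F0' /\
     E = ccomp E0 (CReset F0) /\ E' = ccomp E0' (CReset F0') /\
     adm_ectx E0 E0' /\ adm_ectx F0 F0').
Proof.
  induction 1 as [| v v' E E' Hv Hv' Hvv' _ IH | E E' t t' _ IH Htt' | E E' HE IH
                 | G G' E E' HG _ IH].
  - left; cbn; auto.
  - destruct IH as [[] | (E0 & F0 & E0' & F0' & ? & ? & -> & -> & ? & ?)].
    + left; cbn; auto.
    + right; exists (CAppR v E0), F0, (CAppR v' E0'), F0'; cbn; auto 8 using adm_ectx.
  - destruct IH as [[] | (E0 & F0 & E0' & F0' & ? & ? & -> & -> & ? & ?)].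
    + left; cbn; auto.
    + right; exists (CAppL E0 t), F0, (CAppL E0' t'), F0'; cbn; auto 8 using adm_ectx.
  - right; destruct IH as [[] | (E0 & F0 & E0' & F0' & ? & ? & -> & -> & ? & ?)].
    + exists CHole, E, CHole, E'; cbn; auto 8 using adm_ectx.
    + exists (CReset E0), F0, (CReset E0'), F0'; cbn; auto 8 using adm_ectx.
  - destruct (adm_pure_is_pure G G' HG) as [HGp HG'p].
    destruct IH as [[] | (E0 & F0 & E0' & F0' & ? & ? & -> & -> & ? & ?)].
    + left; cbn; auto using is_pure_ccomp.
    + right; exists (ccomp G E0), F0, (CAppR (Lam (plug_fresh G')) E0'), F0'.
      rewrite ccompA; cbn; auto 8 using adm_ectx.
Qed.

Lemma adm_ctx_rel E E' : adm_ectx E E' -> ctx_rel adm E E'.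
Proof.
  intros HE; destruct (adm_ectx_split E E' HE)
    as [[] | (E0 & F0 & E0' & F0' & ? & ? & -> & -> & HE0 & HF0)].
  - right; auto using adm_plug_fresh.
  - destruct (adm_ectx_is_ectx E0 E0' HE0).
    left; exists E0, F0, E0', F0'; auto 10 using adm_reset, adm_plug_fresh.
Qed.

Lemma adm_rnf_val v v' : adm v v' -> is_val v' -> rnf_val adm v v'.
Proof.
  intros Hvv' Hv'; destruct (adm_val_inv v v' Hvv' Hv')
    as [(n & -> & ->) | (b & b' & -> & -> & Hb)]; repeat split; cbn; auto using adm.
Qed.

Lemma adm_stuck_cont F F' s s' : adm_ectx F F' -> adm s s' ->
  adm (stuck_cont F s) (stuck_cont F' s').
Proof.
  intros; apply adm_reset, adm_subst0; cbn; auto using adm_lift.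
  apply adm_lam, adm_reset, adm_app; auto using adm.
  apply adm_ectx_plug; auto using adm_ectx_liftc, adm.
Qed.

Lemma adm_nf t t' : adm t t' -> is_nf t' -> is_nf t /\ rnf adm t t'.
Proof.
  intros Ht [Hv' | [(E' & x & v' & HE' & Hv' & ->) | (F' & s' & HF' & ->)]].
  - split; [left; eapply adm_is_val | left; apply adm_rnf_val]; eauto.
  - destruct (adm_plug_inv E' t (App (Var x) v')) as (E & r & -> & HE & Hr); auto.
    inversion Hr as [| | t1 v ? ? Hx Hv |  | | G G' u ? HG Hu]; subst.
    inversion Hx; subst; destruct (adm_ectx_is_ectx E E' HE).
    assert (is_val v) by (eapply adm_is_val; eauto).
    split; right; left; [exists E, x, v | exists E, E', x, v, v'];
      auto 10 using adm_ctx_rel, adm_rnf_val.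
  - destruct (adm_plug_shift_inv F' t s') as (F & s & HF & -> & HFF' & Hs); auto.
    split; right; right; [exists F, s | exists F, F', s, s']; auto 10 using adm_stuck_cont.
Qed.

Lemma adm_sync t t' : adm t t' ->
  (exists u', clos_refl_trans term step t' u' /\ irreducible u' /\ adm t u') \/
  (exists u u', step t u /\ clos_refl_trans term step t' u' /\ adm u u').
Proof.
  induction t' as [t' IH] using (well_founded_ind (well_founded_ltof term napp)).
  intros Ht; destruct (progress t') as [(u' & Hu') | Hnf].
  - destruct (adm_step t t' u' Ht Hu') as [[Hu Hlt] | (u & Hu & Huu')].
    + destruct (IH u' Hlt Hu) as [(w & ? & ? & ?) | (u & w & ? & ? & ?)];
        [left; exists w | right; exists u, w]; eauto using rt_trans, rt_step.
    + right; exists u, u'; auto using rt_step.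
  - left; exists t'; auto using rt_refl, nf_irreducible.
Qed.

Lemma adm_eval t t' u : eval t u -> adm t t' -> exists u', eval t' u' /\ adm u u'.
Proof.
  intros [Hred Hirr]; revert t'; apply clos_rt_rt1n in Hred.
  induction Hred as [t | t t1 u Ht1 _ IH]; intros t' Ht;
    destruct (adm_sync t t' Ht) as [(w & Hw & Hirrw & Htw) | (t1' & w & Ht1' & Hw & Htw)].
  - exists w; repeat split; auto.
  - destruct (Hirr t1' Ht1').
  - destruct (adm_nf t w Htw (irreducible_nf w Hirrw)) as [Hnf _].
    destruct (nf_irreducible t Hnf t1 Ht1).
  - rewrite (step_det t t1 t1') in IH by auto.
    destruct (IH Hirr w Htw) as (u' & [Hu' Hirru'] & Huu').
    exists u'; repeat split; eauto using rt_trans.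
Qed.

Lemma adm_red_back t t' u' : clos_refl_trans term step t' u' -> adm t t' ->
  exists u, clos_refl_trans term step t u /\ adm u u'.
Proof.
  intros Hred; revert t; apply clos_rt_rt1n in Hred.
  induction Hred as [t' | t' t1' u' Ht1' _ IH]; intros t Ht.
  - exists t; auto using rt_refl.
  - destruct (adm_step t t' t1' Ht Ht1') as [[Ht1 _] | (t1 & Ht1 & Htt1)]; auto.
    destruct (IH t1 Htt1) as (u & Hu & Huu'); eauto using rt_trans, rt_step.
Qed.

Lemma adm_refined_bisim : refined_bisim adm.
Proof.
  split.
  - intros t t' u Ht Hu; destruct (adm_eval t t' u Hu Ht) as (u' & [Hu' Hirr'] & Huu').
    exists u'; split; [split; auto | apply (adm_nf u u' Huu'), irreducible_nf; auto].
  - intros t' t u' Ht [Hu' Hirr']; destruct (adm_red_back t t' u' Hu' Ht) as (u & Hu & Huu').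
    destruct (adm_nf u u' Huu' (irreducible_nf u' Hirr')) as [Hnf Hrnf].
    exists u; split; [split; auto using nf_irreducible | apply rnf_flip; auto].
Qed.

Theorem lemma6 (F0 F1 : ctx) (t : term) :
  is_pure F0 -> is_pure F1 ->
  rnf_bisimilar
    (Reset (subst0
              (Lam (Reset (plug (liftc 0 F1) (plug (liftc 0 F0) (Var 0)))))
              t))
    (Reset (subst0
              (Lam (Reset (App (Lam (plug (liftc 0 (liftc 0 F1)) (Var 0)))
                               (plug (liftc 0 F0) (Var 0)))))
              t)).
Proof.
  intros _ HF1; exists adm; split; [exact adm_refined_bisim |].
  apply adm_reset, adm_subst0; cbn; auto using adm_refl.
  apply adm_lam, adm_reset, (adm_expand (liftc 0 F1) (liftc 0 F1));
    auto using adm_pure_refl, is_pure_liftc, adm_refl.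
Qed.
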